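(* Consider the multi-flow status-update queueing system described in the context, and assume that (i) there is a single server ($M=1$), (ii) the packet generation and arrival times are synchronized across the $N$ flows, and (iii) the packet service times are exponentially distributed and i.i.d. across time. Then for every realization $\mathcal{I}$ of the packet generation and arrival times, every family of time-dependent age penalty functions $p_t\in\mathcal{P}_{\text{sym}}$ ($t\ge 0$), and every causal policy $\pi\in\Pi$, $$[\{p_t(\bm{\Delta}_{\text{prmp, MAF-LGFS}}(t)), t\geq 0\}\mid\mathcal{I}] \leq_{\text{st}} [\{p_t(\bm{\Delta}_\pi(t)), t\geq 0\}\mid\mathcal{I}].$$ Equivalently, for every $\mathcal{I}$, every $p_t\in\mathcal{P}_{\text{sym}}$, and every non-decreasing functional $\phi:\mathbb{V}\to\mathbb{R}$, $$\mathbb{E}\left[\phi(\{p_t(\bm{\Delta}_{\text{prmp, MAF-LGFS}}(t)),t\geq 0\})\mid\mathcal{I}\right] = \min_{\pi\in\Pi} \mathbb{E}\left[\phi(\{p_t(\bm{\Delta}_\pi(t)),t\geq0\})\mid\mathcal{I}\right],$$ provided the expectations exist.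
   Context: System: $N$ flows of update packets are sent through a queue with $M$ servers and an infinite buffer; each packet can be assigned to any server, each server processes one packet at a time, and packet service times are i.i.d. across servers and time. The system starts at time $0$. The $i$-th packet of flow $n$ is generated at time $S_{n,i}$, arrives at the queue at time $A_{n,i}$, and is delivered to the destination of flow $n$ at time $D_{n,i}$, with $0\le S_{n,1}\le S_{n,2}\le\cdots$ and $S_{n,i}\le A_{n,i}\le D_{n,i}$. Generation and arrival times are synchronized across flows if there are (arbitrary) sequences $\{S_i\}$, $\{A_i\}$ with $S_{n,i}=S_i$, $A_{n,i}=A_i$ for all $n,i$ (out-of-order arrivals are allowed). $\mathcal{I}=\{S_i,A_i, i=1,2,\ldots\}$. The processes generating $\mathcal{I}$ and the service times are mutually independent and do not depend on the scheduling policy. For a random object $X$, $[X\mid\mathcal{I}]$ denotes a random object with the conditional distribution of $X$ given $\mathcal{I}$. A scheduling policy determines which packet each server sends over time; $\Pi$ is the set of causal policies (decisions based on the history and current state of the system). A policy is preemptive if a server may switch to another packet at any time (the preempted packet returns to the queue). Age of flow $n$ under policy $\pi$: $\Delta_n(t)=t-\max\{S_{n,i}: D_{n,i}\le t\}$; $\bm{\Delta}_\pi(t)=(\Delta_1(t),\ldots,\Delta_N(t))$. The initial age vector at $t=0^-$ is the same for all policies. The preemptive MAF-LGFS (Maximum Age First, Last Generated First Served) policy serves, among all packets of all flows, the last generated packet from the flow with the maximum age, ties broken arbitrarily. $\mathcal{P}_{\text{sym}}$ is the set of functions $p:[0,\infty)^N\to\mathbb{R}$ that are symmetric ($p(\bm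 x)=p(x_{[1]},\ldots,x_{[N]})$, where $x_{[i]}$ is the $i$-th largest component) and non-decreasing (in the componentwise order). $\mathbb{V}$ is the set of Lebesgue measurable functions $[0,\infty)\to\mathbb{R}$; a functional $\phi:\mathbb{V}\to\mathbb{R}$ is non-decreasing if $\phi(f_1)\le\phi(f_2)$ whenever $f_1(t)\le f_2(t)$ for all $t$. For random vectors, $\bm X\le_{\text{st}}\bm Y$ means $\Pr(\bm X\in\mathcal{U})\le\Pr(\bm Y\in\mathcal{U})$ for all upper sets $\mathcal{U}$ (sets with $\bm y\in\mathcal{U}$ whenever $\bm y\ge\bm x\in\mathcal{U}$); for processes, $\{X(t)\}\le_{\text{st}}\{Y(t)\}$ means $(X(t_1),\ldots,X(t_n))\le_{\text{st}}(Y(t_1),\ldots,Y(t_n))$ for all $n$ and $0\le t_1<\cdots<t_n$. *)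

From HB Require Import structures.
From mathcomp Require Import all_boot all_order all_algebra all_fingroup.
From mathcomp Require Import all_classical all_reals all_analysis.
Set Implicit Arguments. Unset Strict Implicit. Unset Printing Implicit Defensive.
Import Order.TTheory GRing.Theory Num.Theory.
Local Open Scope classical_set_scope.
Local Open Scope ring_scope.

(* X k = k-th inter-event time of the rate-mu exponential service clock.     *)
Definition mutually_independent (d : measure_display) (T : measurableType d)
  (R : realType) (P : probability T R) (X : nat -> T -> R) : Prop :=
  forall (F : seq nat) (B : nat -> set R), uniq F ->
    (forall k, measurable (B k)) ->
    P (\bigcap_(k in [set x | x \in F]) (X k @^-1` B k)) =
    (\prod_(k <- F) P (X k @^-1` B k))%E.

Definition iid_exponential (d : measure_display) (T : measurableType d)
  (R : realType) (P : probability T R) (mu : R) (X : nat -> T -> R) : Prop :=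
  (forall k, measurable_fun setT (X k)) /\
  mutually_independent P X /\
  (forall k (x : R), 0 <= x -> P [set w | x < X k w] = (expR (- (mu * x)))%:E).

Definition tick (T : Type) (R : realType) (X : nat -> T -> R) (w : T) (k : nat) : R :=
  \sum_(j < k.+1) X j w.

(* A (deterministic, causal, preemptive-allowed) policy chooses at time t the *)
(* packet (flow n, index i) to have in service (or None = idle), based only  *)
(* on the current time, the packets that have arrived by t (with their       *)
(* generation and arrival times) and the service-clock events strictly       *)
(* before t (which, together with the policy, determine the whole past).     *)
Definition policy (R : realType) (N : nat) :=
  R -> (nat -> option (R * R)) -> (nat -> option R) -> option ('I_N * nat).

Definition arr_hist (R : realType) (S A : nat -> R) (t : R) : nat -> option (R * R) :=
  fun i => if A i <= t then Some (S i, A i) else None.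

Definition tick_hist (T : Type) (R : realType) (X : nat -> T -> R) (w : T) (t : R)
  : nat -> option R :=
  fun j => if tick X w j < t then Some (tick X w j) else None.

Definition decision (T : Type) (R : realType) (N : nat) (X : nat -> T -> R)
  (S A : nat -> R) (pi : policy R N) (w : T) (t : R) : option ('I_N * nat) :=
  pi t (arr_hist S A t) (tick_hist X w t).

Definition deliv_at (T : Type) (R : realType) (N : nat) (X : nat -> T -> R)
  (S A : nat -> R) (pi : policy R N) (w : T) (k : nat) (D : seq ('I_N * nat))
  : option ('I_N * nat) :=
  let t := tick X w k in
  match decision X S A pi w t with
  | Some q => if (A q.2 <= t) && (q \notin D) then Some q else None
  | None => None
  end.

Fixpoint delivered (T : Type) (R : realType) (N : nat) (X : nat -> T -> R)
  (S A : nat -> R) (pi : policy R N) (w : T) (k : nat) : seq ('I_N * nat) :=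
  match k with
  | 0 => [::]
  | k'.+1 =>
      let D := delivered X S A pi w k' in
      match deliv_at X S A pi w k' D with
      | Some q => q :: D
      | None => D
      end
  end.

Definition deliv (T : Type) (R : realType) (N : nat) (X : nat -> T -> R)
  (S A : nat -> R) (pi : policy R N) (w : T) (k : nat) : option ('I_N * nat) :=
  deliv_at X S A pi w k (delivered X S A pi w k).

(* Age of flow n at time t >= 0: t - max{S_{n,i} : D_{n,i} <= t}, where the *)
(* initial age D0 n is accounted for by a fictitious update generated at -D0 n. *)
Definition age (T : Type) (R : realType) (N : nat) (X : nat -> T -> R)
  (S A : nat -> R) (D0 : 'I_N -> R) (pi : policy R N) (w : T) (t : R)
  (n : 'I_N) : R :=
  t - sup [set u | u = - D0 n \/
                   exists k i, tick X w k <= t /\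
                     deliv X S A pi w k = Some (n, i) /\ u = S i].

(* state just before the k-th clock event *)
Definition in_queue (T : Type) (R : realType) (N : nat) (X : nat -> T -> R)
  (S A : nat -> R) (pi : policy R N) (w : T) (k : nat) (q : 'I_N * nat) : Prop :=
  A q.2 <= tick X w k /\ q \notin delivered X S A pi w k.

Definition pre_age (T : Type) (R : realType) (N : nat) (X : nat -> T -> R)
  (S A : nat -> R) (D0 : 'I_N -> R) (pi : policy R N) (w : T) (k : nat)
  (n : 'I_N) : R :=
  tick X w k - sup [set u | u = - D0 n \/
                     exists i, (n, i) \in delivered X S A pi w k /\ u = S i].

Definition prmp_MAF_LGFS (T : Type) (R : realType) (N : nat) (X : nat -> T -> R)
  (S A : nat -> R) (D0 : 'I_N -> R) (pi : policy R N) : Prop :=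
  forall w, (forall j, 0 < X j w) -> forall k,
    (exists q, in_queue X S A pi w k q) ->
    exists n i,
      decision X S A pi w (tick X w k) = Some (n, i) /\
      in_queue X S A pi w k (n, i) /\
      (forall m j, in_queue X S A pi w k (m, j) ->
         pre_age X S A D0 pi w k m <= pre_age X S A D0 pi w k n) /\
      (forall j, in_queue X S A pi w k (n, j) -> S j <= S i).

Definition P_sym (R : realType) (N : nat) (p : ('I_N -> R) -> R) : Prop :=
  (forall (s : {perm 'I_N}) (x : 'I_N -> R),
     (forall n, 0 <= x n) -> p (fun n => x (s n)) = p x) /\
  (forall x y : 'I_N -> R, (forall n, 0 <= x n) ->
     (forall n, x n <= y n) -> p x <= p y).

Definition upper_set (R : realType) (n : nat) (U : set ('I_n -> R)) : Prop :=
  forall x y, U x -> (forall j, x j <= y j) -> U y.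

Definition st_le_proc (d : measure_display) (T : measurableType d) (R : realType)
  (P : probability T R) (Y Z : T -> R -> R) : Prop :=
  forall (n : nat) (ts : 'I_n -> R),
    (forall j, 0 <= ts j) ->
    (forall j j' : 'I_n, (j < j')%N -> ts j < ts j') ->
    forall U : set ('I_n -> R), upper_set U ->
      measurable [set w | U (fun j => Y w (ts j))] ->
      measurable [set w | U (fun j => Z w (ts j))] ->
      (P [set w | U (fun j => Y w (ts j))] <= P [set w | U (fun j => Z w (ts j))])%E.

Definition penalty_proc (T : Type) (R : realType) (N : nat) (X : nat -> T -> R)
  (S A : nat -> R) (D0 : 'I_N -> R) (p : R -> ('I_N -> R) -> R)
  (pi : policy R N) : T -> R -> R :=
  fun w t => p t (age X S A D0 pi w t).

From HB Require Import structures.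
From mathcomp Require Import all_boot all_order all_algebra all_fingroup.
From mathcomp Require Import all_classical all_reals all_analysis.
Import Order.TTheory GRing.Theory Num.Theory.
Local Open Scope classical_set_scope.
Local Open Scope ring_scope.
Set Implicit Arguments. Unset Strict Implicit.

(* Both policies are driven by the same service clock, so the comparison is
   pathwise, on the almost sure event where all service times are positive.
   Call the freshness of a flow the latest generation time of its delivered
   updates.  By induction over service events, the freshness vector of any
   policy is dominated, after a permutation of the flows, by that of
   MAF-LGFS: since all flows share generation and arrival times, MAF-LGFS
   delivers a packet at least as fresh as any arrived one, and it gives it
   to the least fresh flow, so swapping that flow with the one served by the
   other policy restores the domination.  Some permutation works for
   infinitely many events, which passes the domination to the limit, i.e. to
   the ages; a symmetric nondecreasing penalty then respects it. *)

Lemma sup_eq_max (R : realType) (E : set R) (x : R) :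
  E x -> ubound E x -> sup E = x.
Proof.
move=> Ex ubx; apply/le_anti/andP; split; first by apply: ge_sup; [exists x|].
by apply: sup_upper_bound => //; split; exists x.
Qed.

Lemma finite_choice_infinitely_often (I : finType) (Q : I -> nat -> Prop) :
  (forall K, exists i, Q i K) ->
  exists i, forall K, exists2 K', (K <= K')%N & Q i K'.
Proof.
move=> someQ; apply: contrapT => /forallNP finQ.
have /choice[B QleB] : forall i, exists B, forall K, (B <= K)%N -> ~ Q i K.
  move=> i; have /existsNP[B noQ] := finQ i.
  by exists B => K BK QK; apply: noQ; exists K.
have [i QiK] := someQ (\max_i B i)%N.
exact: QleB i _ (leq_bigmax i) QiK.
Qed.

Lemma perm_dominated_update d (R : porderType d) (N : nat)
    (f g f' g' : 'I_N -> R) (s : {perm 'I_N}) (j m : 'I_N) :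
  (forall n, f n <= g (s n))%O -> (forall x, g m <= g x)%O ->
  (forall x, g x <= g' x)%O -> (forall n, n != j -> f' n = f n) ->
  (f' j <= g' m)%O ->
  exists s' : {perm 'I_N}, forall n, (f' n <= g' (s' n))%O.
Proof.
move=> fg gm gg' f'f f'j; exists (tperm j (s^-1 m) * s)%g => n; rewrite permM.
have [->|nj] := eqVneq n j; first by rewrite tpermL permKV.
rewrite f'f //; have [->|nm] := eqVneq n (s^-1 m)%g.
  rewrite tpermR; apply: le_trans (fg _) _; rewrite permKV.
  exact: le_trans (gm (s j)) (gg' _).
by rewrite tpermD 1?eq_sym //; exact: le_trans (fg n) (gg' _).
Qed.

Lemma P_sym_le_perm (R : realType) (N : nat) (p : ('I_N -> R) -> R)
    (s : {perm 'I_N}) (x y : 'I_N -> R) :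
  P_sym p -> (forall n, 0 <= x n) -> (forall n, x (s n) <= y n) -> p x <= p y.
Proof.
move=> [p_perm p_mono] x_ge0 xy; rewrite -(p_perm s x x_ge0).
by apply: p_mono.
Qed.

Section SamplePath.
Variables (R : realType) (N : nat) (T : Type) (X : nat -> T -> R)
  (S A : nat -> R) (D0 : 'I_N -> R) (w : T).
Hypothesis X_ge0 : forall k, 0 <= X k w.
Implicit Types (pi : policy R N) (q : 'I_N * nat).

Lemma tick_le : {homo tick X w : k l / (k <= l)%N >-> k <= l}.
Proof.
by apply: homo_leq lexx le_trans _ => k; rewrite /tick [leRHS]big_ord_recr lerDl.
Qed.

Lemma mem_deliveredS pi k q : (q \in delivered X S A pi w k.+1) =
  (deliv X S A pi w k == Some q) || (q \in delivered X S A pi w k).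
Proof.
rewrite /= -/(deliv _ _ _ _ _ _).
by case: deliv => [q'|] //=; rewrite in_cons eq_sym.
Qed.

Lemma mem_delivered pi k q : q \in delivered X S A pi w k <->
  exists2 j, (j < k)%N & deliv X S A pi w j = Some q.
Proof.
elim: k => [|k IH]; first by split=> // -[].
rewrite mem_deliveredS; split.
- case/orP => [/eqP Ek | /IH[j jk Ej]]; first by exists k.
  by exists j => //; exact: ltnW.
- move=> [j]; rewrite ltnS leq_eqVlt => /orP[/eqP-> -> | jk Ej].
    by rewrite eqxx.
  by apply/orP; right; apply/IH; exists j.
Qed.

Lemma deliv_in_queue pi k q :
  deliv X S A pi w k = Some q -> in_queue X S A pi w k q.
Proof.
rewrite /deliv /deliv_at; case: decision => [q'|] //.
by case: ifP => // /andP[arrived undelivered] [<-].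
Qed.

Lemma in_queue_deliv pi k q :
  decision X S A pi w (tick X w k) = Some q -> in_queue X S A pi w k q ->
  deliv X S A pi w k = Some q.
Proof. by rewrite /deliv /deliv_at => -> [-> ->]. Qed.

Variable t : R.

Fixpoint freshness pi K n : R :=
  if K is K'.+1 then
    let f := freshness pi K' n in
    if tick X w K' <= t then
      if deliv X S A pi w K' is Some (m, i) then
        if m == n then Num.max f (S i) else f
      else f
    else f
  else - D0 n.

Lemma freshnessS_eq pi K n :
  (tick X w K <= t -> forall i, deliv X S A pi w K <> Some (n, i)) ->
  freshness pi K.+1 n = freshness pi K n.
Proof.
move=> nodeliv /=; case: ifP => // tK; case E: deliv => [[m i]|] //.
by case: eqP => // mn; move: E; rewrite mn; move/nodeliv: tK => /[apply].
Qed.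

Lemma freshnessS_deliv pi K n i :
  tick X w K <= t -> deliv X S A pi w K = Some (n, i) ->
  freshness pi K.+1 n = Num.max (freshness pi K n) (S i).
Proof. by move=> tK E /=; rewrite tK E eqxx. Qed.

Lemma freshness_le pi n :
  {homo freshness pi ^~ n : K K' / (K <= K')%N >-> K <= K'}.
Proof.
apply: homo_leq lexx le_trans _ => K /=.
case: ifP => // _; case: deliv => [[m i]|] //; case: ifP => // _.
by rewrite le_max lexx.
Qed.

Lemma freshness_ge pi K n : - D0 n <= freshness pi K n.
Proof. exact: (freshness_le pi n (leq0n K)). Qed.

Lemma freshness_ub pi K n k i : (k < K)%N -> tick X w k <= t ->
  deliv X S A pi w k = Some (n, i) -> S i <= freshness pi K n.
Proof.
move=> kK tk E; apply: le_trans (freshness_le pi n kK).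
by rewrite (freshnessS_deliv tk E) le_max lexx orbT.
Qed.

Lemma freshness_attained pi K n : freshness pi K n = - D0 n \/
  exists k i, [/\ (k < K)%N, tick X w k <= t, deliv X S A pi w k = Some (n, i)
                & freshness pi K n = S i].
Proof.
elim: K => [|K IH]; first by left.
have IHS : freshness pi K n = - D0 n \/ exists k i, [/\ (k < K.+1)%N,
    tick X w k <= t, deliv X S A pi w k = Some (n, i) & freshness pi K n = S i].
  case: IH => [|[k [i [kK ? ? ?]]]]; [by left | right; exists k, i].
  by split => //; exact: ltnW.
have [tK|tK] := leP (tick X w K) t; last first.
  by rewrite freshnessS_eq // => /(lt_le_trans tK); rewrite ltxx.
case E: (deliv X S A pi w K) => [[m i]|]; last first.
  by rewrite freshnessS_eq // => _ i; rewrite E.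
have [mn|mn] := eqVneq m n; last first.
  by rewrite freshnessS_eq // => _ i'; rewrite E => -[/eqP]; rewrite (negbTE mn).
subst m; rewrite (freshnessS_deliv tK E).
by case: leP => _; [right; exists K, i | exact: IHS].
Qed.

Lemma pre_age_freshness pi K n : tick X w K <= t ->
  pre_age X S A D0 pi w K n = tick X w K - freshness pi K n.
Proof.
move=> tK; congr (_ - _); apply: sup_eq_max.
  case: (freshness_attained pi K n) => [->|[k [i [kK _ E ->]]]]; first by left.
  by right; exists i; split => //; apply/mem_delivered; exists k.
move=> y [->|[i [/mem_delivered[k kK E] ->]]]; first exact: freshness_ge.
exact: freshness_ub kK (le_trans (tick_le (ltnW kK)) tK) E.
Qed.

Lemma not_in_queue_freshness pi K x i : tick X w K <= t -> A i <= tick X w K ->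
  ~ in_queue X S A pi w K (x, i) -> S i <= freshness pi K x.
Proof.
move=> tK Ai notq.
have /mem_delivered[k kK E] : (x, i) \in delivered X S A pi w K.
  by apply: contrapT => /negP undelivered; apply: notq.
exact: freshness_ub kK (le_trans (tick_le (ltnW kK)) tK) E.
Qed.

Hypothesis S_ge0 : forall i, 0 <= S i.
Hypothesis D0_ge0 : forall n, 0 <= D0 n.

Lemma freshness_le_arrived pi K n v : tick X w K <= t -> 0 <= v ->
  (forall i, A i <= tick X w K -> S i <= v) -> freshness pi K n <= v.
Proof.
move=> tK v_ge0 arrived_le.
case: (freshness_attained pi K n) => [->|[k [i [kK _ E ->]]]].
  by apply: le_trans v_ge0; rewrite oppr_le0.
apply: arrived_le; have [Ai _] := deliv_in_queue E.
exact: le_trans Ai (tick_le (ltnW kK)).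
Qed.

Lemma freshness_min_of_max_age pi K m i0 : tick X w K <= t ->
  in_queue X S A pi w K (m, i0) ->
  (forall x j, in_queue X S A pi w K (x, j) ->
     pre_age X S A D0 pi w K x <= pre_age X S A D0 pi w K m) ->
  forall x, freshness pi K m <= freshness pi K x.
Proof.
move=> tK [Ai0 _] maxage x.
have [[j xj]|noq] := pselect (exists j, in_queue X S A pi w K (x, j)).
  by move: (maxage x j xj); rewrite !pre_age_freshness // lerD2l lerN2.
have fresh_x i : A i <= tick X w K -> S i <= freshness pi K x.
  by move=> Ai; apply: not_in_queue_freshness => // xi; apply: noq; exists i.
apply: freshness_le_arrived => //; exact: le_trans (S_ge0 i0) (fresh_x _ Ai0).
Qed.

Lemma arrived_le_max_freshness pi K m i0 : tick X w K <= t ->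
  (forall j, in_queue X S A pi w K (m, j) -> S j <= S i0) ->
  forall i, A i <= tick X w K -> S i <= Num.max (freshness pi K m) (S i0).
Proof.
move=> tK lgfs i Ai; rewrite le_max.
have [mi|notq] := pselect (in_queue X S A pi w K (m, i)).
  by rewrite lgfs ?orbT.
by rewrite not_in_queue_freshness.
Qed.

Hypothesis S_le_A : forall i, S i <= A i.
Hypothesis t_ge0 : 0 <= t.

Definition delivered_gen_times pi n : set R := [set u | u = - D0 n \/
  exists k i, tick X w k <= t /\ deliv X S A pi w k = Some (n, i) /\ u = S i].

Lemma delivered_gen_times_le pi n : ubound (delivered_gen_times pi n) t.
Proof.
move=> u [->|[k [i [tk [E ->]]]]].
  by apply: le_trans t_ge0; rewrite oppr_le0.
have [Ai _] := deliv_in_queue E; exact: le_trans (S_le_A i) (le_trans Ai tk).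
Qed.

Lemma freshness_le_sup pi K n :
  freshness pi K n <= sup (delivered_gen_times pi n).
Proof.
apply: sup_upper_bound.
  by split; [exists (- D0 n); left | exists t; exact: delivered_gen_times_le].
case: (freshness_attained pi K n) => [->|[k [i [_ tk E ->]]]]; first by left.
by right; exists k, i.
Qed.

Lemma freshness_eventually_ge pi n u : delivered_gen_times pi n u ->
  exists K0, forall K, (K0 <= K)%N -> u <= freshness pi K n.
Proof.
move=> [->|[k [i [tk [E ->]]]]]; first by exists 0%N => K _; exact: freshness_ge.
by exists k.+1 => K kK; exact: freshness_ub kK tk E.
Qed.

Lemma age_ge0 pi n : 0 <= age X S A D0 pi w t n.
Proof.
rewrite subr_ge0; apply: ge_sup; first by exists (- D0 n); left.
exact: delivered_gen_times_le.
Qed.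

Lemma age_perm_dominated piA piB :
  (forall K, exists s : {perm 'I_N},
     forall n, freshness piB K n <= freshness piA K (s n)) ->
  exists s : {perm 'I_N},
    forall n, age X S A D0 piA w t (s n) <= age X S A D0 piB w t n.
Proof.
move=> dom; have [s dom_io] := finite_choice_infinitely_often dom.
exists s => n; rewrite lerD2l lerN2; apply: ge_sup; first by exists (- D0 n); left.
move=> u /freshness_eventually_ge[K0 geK0]; have [K K0K domK] := dom_io K0.
exact: le_trans (geK0 _ K0K) (le_trans (domK n) (freshness_le_sup _ _ _)).
Qed.

Section MaxAgeFirst.
Variables piA piB : policy R N.
(* [prmp_MAF_LGFS X S A D0 piA] on the sample path [w] *)
Hypothesis maf : forall k, (exists q, in_queue X S A piA w k q) ->
  exists n i,
    decision X S A piA w (tick X w k) = Some (n, i) /\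
    in_queue X S A piA w k (n, i) /\
    (forall m j, in_queue X S A piA w k (m, j) ->
       pre_age X S A D0 piA w k m <= pre_age X S A D0 piA w k n) /\
    (forall j, in_queue X S A piA w k (n, j) -> S j <= S i).

Lemma maf_freshness_step K (s : {perm 'I_N}) :
  (forall n, freshness piB K n <= freshness piA K (s n)) ->
  exists s' : {perm 'I_N},
    forall n, freshness piB K.+1 n <= freshness piA K.+1 (s' n).
Proof.
move=> dom; have monoA x := freshness_le piA x (leqnSn K).
have unchangedB n :
    (tick X w K <= t -> forall i, deliv X S A piB w K <> Some (n, i)) ->
    freshness piB K.+1 n <= freshness piA K.+1 (s n).
  by move=> nodeliv; rewrite freshnessS_eq //; exact: le_trans (dom n) (monoA _).
have [tK|tK] := leP (tick X w K) t; last first.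
  by exists s => n; apply: unchangedB => /(lt_le_trans tK); rewrite ltxx.
case EB: (deliv X S A piB w K) => [[j i]|]; last first.
  by exists s => n; apply: unchangedB => _ i; rewrite EB.
have Bj : freshness piB K.+1 j = Num.max (freshness piB K j) (S i).
  exact: freshnessS_deliv tK EB.
have Bn n : n != j -> freshness piB K.+1 n = freshness piB K n.
  move=> nj; rewrite freshnessS_eq // => _ i'; rewrite EB => -[jn _].
  by rewrite jn eqxx in nj.
have [Ai _] := deliv_in_queue EB.
have [[q Aq]|emptyA] := pselect (exists q, in_queue X S A piA w K q); last first.
  exists s => n; have [->|nj] := eqVneq n j; last first.
    by rewrite Bn //; exact: le_trans (dom n) (monoA _).
  rewrite Bj ge_max (le_trans (dom j) (monoA _)) /=.
  apply: le_trans (monoA _); apply: not_in_queue_freshness => // sji.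
  by apply: emptyA; exists (s j, i).
have [m [i0 [decA [Am [maxage lgfs]]]]] := maf (ex_intro _ q Aq).
have Am' : freshness piA K.+1 m = Num.max (freshness piA K m) (S i0).
  exact: freshnessS_deliv tK (in_queue_deliv decA Am).
have newest := arrived_le_max_freshness tK lgfs.
have minA := freshness_min_of_max_age tK Am maxage.
apply: (perm_dominated_update dom minA monoA Bn).
rewrite Bj Am' ge_max newest // andbT.
by apply: freshness_le_arrived => //; rewrite le_max S_ge0 orbT.
Qed.

Lemma maf_freshness_dominates K :
  exists s : {perm 'I_N}, forall n, freshness piB K n <= freshness piA K (s n).
Proof.
elim: K => [|K [s dom]]; last exact: maf_freshness_step dom.
by exists 1%g => n; rewrite perm1.
Qed.

Lemma maf_penalty_le (p : ('I_N -> R) -> R) : P_sym p ->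
  p (age X S A D0 piA w t) <= p (age X S A D0 piB w t).
Proof.
move=> p_sym; have [s dom] := age_perm_dominated maf_freshness_dominates.
exact: P_sym_le_perm p_sym (age_ge0 _) dom.
Qed.

End MaxAgeFirst.
End SamplePath.

Lemma iid_exponential_gt0_ae d (T : measurableType d) (R : realType)
    (P : probability T R) (mu : R) (X : nat -> T -> R) :
  iid_exponential P mu X -> \forall w \ae P, forall k, 0 < X k w.
Proof.
move=> [mX [_ tail]]; apply: ae_foralln => k.
have mXpos : measurable [set w | 0 < X k w].
  have := mX k measurableT _ (measurable_itv `]0, +oo[%O).
  rewrite setTI; congr measurable.
  by apply/seteqP; split => w /=; rewrite in_itv /= andbT.
exists (~` [set w | 0 < X k w]); split => //; first exact: measurableC.
(* the measure coercion of the [ae] filter hides [probability_setC] *)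
change (P (~` [set w | 0 < X k w]) = 0%E).
by rewrite probability_setC // (tail k 0) // mulr0 oppr0 expR0 subee.
Qed.

Lemma le_measure_ae d (T : measurableType d) (R : realType)
    (mu : {measure set T -> \bar R}) (E F : set T) :
  measurable E -> measurable F -> (\forall w \ae mu, E w -> F w) ->
  (mu E <= mu F)%E.
Proof.
move=> mE mF [M [mM M0 EFM]].
have EFM' : E `<=` F `|` M.
  move=> w Ew; have [Mw|nMw] := pselect (M w); [by right | left].
  by apply: contrapT => nFw; apply: nMw; apply: EFM => /(_ Ew).
rewrite -(measureU0 mF mM M0) le_measure ?inE //; exact: measurableU.
Qed.

Theorem theorem1 (R : realType) (d : measure_display) (T : measurableType d)
  (P : probability T R) (mu : R) (X : nat -> T -> R)
  (N : nat) (S A : nat -> R) (D0 : 'I_N -> R)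
  (p : R -> ('I_N -> R) -> R) (piMAF pi : policy R N) :
  0 < mu ->
  iid_exponential P mu X ->
  (forall i j, (i <= j)%N -> S i <= S j) ->
  (forall i, 0 <= S i /\ S i <= A i) ->
  (forall n, 0 <= D0 n) ->
  (forall t, 0 <= t -> P_sym (p t)) ->
  prmp_MAF_LGFS X S A D0 piMAF ->
  st_le_proc P (penalty_proc X S A D0 p piMAF) (penalty_proc X S A D0 p pi).
Proof.
move=> _ /iid_exponential_gt0_ae X_gt0 _ S_bounds D0_ge0 p_sym maf.
move=> n ts ts_ge0 _ U U_up mMAF mpi; apply: le_measure_ae mMAF mpi _.
apply: filterS X_gt0 => w Xw_gt0 UMAF; apply: (U_up _ _ UMAF) => j.
have X_ge0 k := ltW (Xw_gt0 k).
exact: (maf_penalty_le X_ge0 (fun i => (S_bounds i).1) D0_ge0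
  (fun i => (S_bounds i).2) (ts_ge0 j) pi (maf w Xw_gt0) (p_sym _ (ts_ge0 j))).
Qed.
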